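(* Let $I\subseteq\mathfrak{M}$ be an ideal of $P$, let $Z=\{z_1,\dots,z_s\}$ be a set of $s\ge 1$ distinct indeterminates in $X$, and let $\sigma$ be a $Z$-separating term ordering for $I$. (a) The reduced $\sigma$-Gröbner basis of $I$ is a $Z$-separating $\sigma$-Gröbner basis of $I$. (b) Let $\{\frac1{c_1}f_1,\dots,\frac1{c_s}f_s,g_1,\dots,g_t\}$ be a $Z$-separating $\sigma$-Gröbner basis of $I$, and for $i=1,\dots,s$ let $h_i=\mathrm{NF}_{\hat\sigma,I\cap\widehat P}(\mathrm{tail}_{z_i}(f_i))$. Then the reduced $\sigma$-Gröbner basis of $I$ is $\{z_1-h_1,\dots,z_s-h_s,g_1,\dots,g_t\}$.
   Context: $K$ is a field, $P=K[x_1,\dots,x_n]$, $X=\{x_1,\dots,x_n\}$, $\mathfrak{M}=\langle x_1,\dots,x_n\rangle$, $\widehat P=K[X\setminus Z]$, $\hat\sigma$ the restriction of $\sigma$ to $\widehat P$, and $\mathrm{NF}_{\hat\sigma,J}(h)$ the normal form of $h$ modulo an ideal $J$ of $\widehat P$ with respect to $\hat\sigma$. For $f\in P$, $\mathrm{indets}(f)$ is the set of indeterminates dividing some term in the support of $f$. For $f\in\mathfrak{M}$ with nonzero degree-one part $\mathrm{Lin}_{\mathfrak{M}}(f)$, $z\in\mathrm{indets}(\mathrm{Lin}_{\mathfrak M}(f))$, and $c\neq 0$ the coefficient of $z$ in $f$, set $\mathrm{tail}_z(f)=z-\frac1cf$; $f$ is $z$-separating if $z\notin\mathrm{indets}(\mathrm{tail}_z(f))$.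 A tuple $(f_1,\dots,f_s)$ of nonzero elements of $\mathfrak M$ is coherently $Z$-separating if each $f_i$ is $z_i$-separating and $z_i\notin\mathrm{indets}(f_j)$ for $j\ne i$. A term ordering $\sigma$ is a $Z$-separating term ordering for $I$ if there are $f_1,\dots,f_s\in I\setminus\{0\}$ with $z_i=\mathrm{LT}_\sigma(f_i)$ and $(f_1,\dots,f_s)$ coherently $Z$-separating. For such $\sigma$, a $Z$-separating $\sigma$-Gröbner basis of $I$ is a $\sigma$-Gröbner basis of the form $\{\frac1{c_1}f_1,\dots,\frac1{c_s}f_s,g_1,\dots,g_t\}$ with $(f_1,\dots,f_s)$ coherently $Z$-separating, $c_i=\mathrm{LC}_\sigma(f_i)$, $z_i=\mathrm{LT}_\sigma(f_i)$, and $\{g_1,\dots,g_t\}$ the reduced $\hat\sigma$-Gröbner basis of $I\cap\widehat P$. *)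

From HB Require Import structures.
From mathcomp Require Import all_boot all_order all_algebra.
From mathcomp Require Import mpoly.
Set Implicit Arguments. Unset Strict Implicit. Unset Printing Implicit Defensive.
Import GRing.Theory.
Local Open Scope ring_scope.

Section Defs.
Variables (K : fieldType) (n : nat).
Local Notation P := {mpoly K[n]}.

Definition term_order (le : rel 'X_{1..n}) : Prop :=
  [/\ reflexive le, antisymmetric le, transitive le, total le &
      (forall m, le 0%MM m) /\
      (forall m1 m2 m, le m1 m2 -> le (m1 + m)%MM (m2 + m)%MM)].

(* LT_sigma(f): the le-largest term of the support of f (0 if f = 0). *)
Definition mLT (le : rel 'X_{1..n}) (f : P) : 'X_{1..n} :=
  foldl (fun acc m => if le acc m then m else acc)
        (head 0%MM (msupp f)) (msupp f).

Definition mLC (le : rel 'X_{1..n}) (f : P) : K := f@_(mLT le f).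

Definition is_ideal (I : P -> Prop) : Prop :=
  [/\ I 0, (forall f g, I f -> I g -> I (f + g)) & (forall f g, I g -> I (f * g))].

Definition in_M (f : P) : Prop :=
  exists a : 'I_n -> P, f = \sum_(i < n) a i * 'X_i.

Definition in_indets (j : 'I_n) (f : P) : bool :=
  has (fun m : 'X_{1..n} => (0 < m j)%N) (msupp f).

Definition Lin (f : P) : P :=
  \sum_(m <- msupp f | mdeg m == 1%N) f@_m *: 'X_[m].

Definition tail (j : 'I_n) (f : P) : P := 'X_j - (f@_(U_(j)%MM))^-1 *: f.

Definition z_separating (j : 'I_n) (f : P) : Prop :=
  [/\ in_M f, Lin f != 0, in_indets j (Lin f) & ~~ in_indets j (tail j f)].

Definition coh_Z_separating s (z : 'I_s -> 'I_n) (f : 'I_s -> P) : Prop :=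
  forall i, [/\ f i != 0, z_separating (z i) (f i) &
                forall j, j != i -> ~~ in_indets (z i) (f j)].

Definition Z_separating_order s (le : rel 'X_{1..n}) (I : P -> Prop)
    (z : 'I_s -> 'I_n) : Prop :=
  exists f : 'I_s -> P,
    [/\ forall i, I (f i), forall i, mLT le (f i) = U_(z i)%MM
      & coh_Z_separating z f].

(* P^ = K[X \ Z] viewed inside P: polynomials with no indeterminate in Z *)
Definition in_Phat s (z : 'I_s -> 'I_n) (f : P) : Prop :=
  forall i, ~~ in_indets (z i) f.

Definition Ihat s (I : P -> Prop) (z : 'I_s -> 'I_n) : P -> Prop :=
  fun f => I f /\ in_Phat z f.

Definition is_GB (le : rel 'X_{1..n}) (J : P -> Prop) (G : seq P) : Prop :=
  (forall g, g \in G -> J g /\ g != 0) /\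
  (forall f, J f -> f != 0 -> exists2 g, g \in G & (mLT le g <= mLT le f)%MM).

Definition is_reduced_GB (le : rel 'X_{1..n}) (J : P -> Prop) (G : seq P) : Prop :=
  [/\ is_GB le J G,
      (forall g, g \in G -> mLC le g = 1) &
      (forall g g', g \in G -> g' \in G -> g' != g ->
         forall m, m \in msupp g -> ~~ (mLT le g' <= m)%MM)].

Definition is_NF (le : rel 'X_{1..n}) (J : P -> Prop) (h r : P) : Prop :=
  J (h - r) /\
  forall m, m \in msupp r ->
    ~ (exists f, [/\ J f, f != 0 & (mLT le f <= m)%MM]).

Definition ZGB_seq s (le : rel 'X_{1..n}) (f : 'I_s -> P) (gs : seq P) : seq P :=
  [seq (mLC le (f i))^-1 *: f i | i <- enum 'I_s] ++ gs.

Definition Z_separating_GB_data s (le : rel 'X_{1..n}) (I : P -> Prop)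
    (z : 'I_s -> 'I_n) (f : 'I_s -> P) (gs : seq P) : Prop :=
  [/\ coh_Z_separating z f,
      forall i, mLT le (f i) = U_(z i)%MM,
      is_reduced_GB le (Ihat I z) gs &
      is_GB le I (ZGB_seq le f gs)].

Definition Z_separating_GB s (le : rel 'X_{1..n}) (I : P -> Prop)
    (z : 'I_s -> 'I_n) (G : seq P) : Prop :=
  exists f gs, Z_separating_GB_data le I z f gs /\ G =i ZGB_seq le f gs.

End Defs.

From HB Require Import structures.
From mathcomp Require Import all_boot all_order all_algebra.
From mathcomp Require Import mpoly.
Set Implicit Arguments. Unset Strict Implicit. Unset Printing Implicit Defensive.
Import GRing.Theory.
Local Open Scope ring_scope.

(* Everything rests on one observation: since I lies in M, no nonzero element
   of I has a constant term, so a nonzero element of I whose leading term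
   divides the indeterminate z has leading term exactly z.

   (a) Let G be the reduced Groebner basis of I.  Each z_i is the leading term
   of some f_i in I, hence divisible by the leading term of some g in G, hence
   equal to it; call this element gZ i.  Reducedness forces every term of G
   divisible by some z_i to occur only in gZ i, and there only as z_i itself.
   So gZ i = z_i - (terms free of Z), the gZ i are coherently Z-separating,
   and the elements of G free of Z form the reduced Groebner basis of I cap P^.

   (b) The normal form h_i of tail(f_i) only has terms in P^ smaller than z_i,
   so z_i - h_i is monic with leading term z_i; it lies in I because it differs
   from f_i/c_i by an element of I cap P^. *)

Section LeadingTerm.
Variables (K : fieldType) (n : nat) (le : rel 'X_{1..n}).
Hypothesis le_order : term_order le.
Local Notation P := {mpoly K[n]}.

Lemma term_le_refl m : le m m.
Proof. by case: le_order. Qed.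

Lemma term_le_anti m1 m2 : le m1 m2 -> le m2 m1 -> m1 = m2.
Proof. by case: le_order => _ anti _ _ _ H1 H2; apply: anti; rewrite H1 H2. Qed.

Lemma term_le_trans m2 m1 m3 : le m1 m2 -> le m2 m3 -> le m1 m3.
Proof. by case: le_order => _ _ trans _ _; apply: trans. Qed.

Lemma term_le_total m1 m2 : le m1 m2 || le m2 m1.
Proof. by case: le_order => _ _ _ total _; apply: total. Qed.

(* A term ordering refines divisibility, since 1 is the least term. *)
Lemma le_of_divides m1 m2 : (m1 <= m2)%MM -> le m1 m2.
Proof.
case: le_order => _ _ _ _ [le0 leD] m12.
by have := leD 0%MM (m2 - m1)%MM m1 (le0 _); rewrite add0m submK.
Qed.

Lemma foldl_max (ms : seq 'X_{1..n}) acc :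
  let r := foldl (fun acc m => if le acc m then m else acc) acc ms in
  r \in acc :: ms /\ forall x, x \in acc :: ms -> le x r.
Proof.
elim: ms acc => [|a ms IH] acc /=.
  by split=> [|x]; rewrite ?mem_seq1 // => /eqP ->; apply: term_le_refl.
case: ifP (term_le_total acc a) => [le_acc _|_ /= le_a].
  have [in_r max_r] := IH a.
  split; first by move: in_r; rewrite !inE => /orP [] ->; rewrite ?orbT.
  move=> x; rewrite !inE => /or3P [/eqP->|/eqP->|xs].
  - by apply: term_le_trans le_acc _; apply: max_r; rewrite inE eqxx.
  - by apply: max_r; rewrite inE eqxx.
  - by apply: max_r; rewrite inE xs orbT.
have [in_r max_r] := IH acc.
split; first by move: in_r; rewrite !inE => /orP [] ->; rewrite ?orbT.
move=> x; rewrite !inE => /or3P [/eqP->|/eqP->|xs].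
- by apply: max_r; rewrite inE eqxx.
- by apply: term_le_trans le_a _; apply: max_r; rewrite inE eqxx.
- by apply: max_r; rewrite inE xs orbT.
Qed.

Lemma mLT_in (f : P) : f != 0 -> mLT le f \in msupp f.
Proof.
rewrite -msupp_eq0 /mLT; case: (msupp f) => [|a ms] //= _.
by have [+ _] := foldl_max (a :: ms) a; rewrite /= !inE orbA orbb.
Qed.

Lemma mLT_max (f : P) m : m \in msupp f -> le m (mLT le f).
Proof.
rewrite /mLT; case: (msupp f) => [|a ms] //= m_in.
by have [_ ->] := foldl_max (a :: ms) a; rewrite // inE m_in orbT.
Qed.

Lemma mLT_eq (f : P) m :
  m \in msupp f -> (forall m', m' \in msupp f -> le m' m) -> mLT le f = m.
Proof.
move=> m_in m_max; have f0 : f != 0 by rewrite -msupp_eq0; case: (msupp f) m_in.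
by apply: term_le_anti; [apply: m_max (mLT_in f0) | apply: mLT_max].
Qed.

Lemma mLTZ (c : K) (f : P) : c != 0 -> mLT le (c *: f) = mLT le f.
Proof.
move=> c0; have supp_cf := perm_mem (msuppZ f c0).
have [->|f0] := eqVneq f 0; first by rewrite scaler0.
apply: mLT_eq => [|m']; rewrite supp_cf; [exact: mLT_in | exact: mLT_max].
Qed.

Lemma mLC_neq0 (f : P) : f != 0 -> mLC le f != 0.
Proof. by move=> f0; rewrite /mLC -mcoeff_msupp; apply: mLT_in. Qed.

Lemma is_GB_eq_mem (J : P -> Prop) (G1 G2 : seq P) :
  G1 =i G2 -> is_GB le J G1 -> is_GB le J G2.
Proof.
move=> G12 [inJ lead]; split=> [g|f Jf f0]; first by rewrite -G12; apply: inJ.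
by have [g ? ?] := lead f Jf f0; exists g; rewrite -?G12.
Qed.

End LeadingTerm.

Section Indeterminates.
Variables (K : fieldType) (n : nat).
Local Notation P := {mpoly K[n]}.

Lemma in_M_const (f : P) : in_M f -> f@_0%MM = 0.
Proof.
case=> a ->; rewrite raddf_sum big1 // => i _.
apply: memN_msupp_eq0; rewrite (perm_mem (msuppMX _ _)).
apply/mapP => -[m _ /eqP]; apply/negP; rewrite eq_sym.
by apply/negP => /eqP /mnmP /(_ i); rewrite mnmDE mnm0E mnm1E eqxx.
Qed.

Lemma divides_U m (j : 'I_n) : (m <= U_(j))%MM -> m = 0%MM \/ m = U_(j)%MM.
Proof.
move/mnm_lepP => m_le; case Ej: (m j) => [|k].
  left; apply/mnmP => i; have := m_le i; rewrite mnm0E mnm1E.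
  by case: eqP => [<-|_]; rewrite ?Ej //; case: (m i).
right; apply/mnmP => i; have := m_le i; rewrite mnm1E.
case: eqP => [<-|_]; last by case: (m i).
by rewrite Ej; case: k Ej.
Qed.

Lemma mLT_divides_U le (g : P) (j : 'I_n) :
  term_order le -> in_M g -> g != 0 ->
  (mLT le g <= U_(j))%MM -> mLT le g = U_(j)%MM.
Proof.
move=> le_order gM g0 /divides_U [LT0|//].
by have := mLT_in le_order g0; rewrite LT0 mcoeff_msupp in_M_const ?eqxx.
Qed.

Lemma in_indets_term (f : P) m (j : 'I_n) :
  m \in msupp f -> (U_(j) <= m)%MM -> in_indets j f.
Proof. by move=> m_in; rewrite lep1mP => mj; apply/hasP; exists m; rewrite ?lt0n. Qed.

Lemma notin_indets_term (f : P) m (j : 'I_n) :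
  ~~ in_indets j f -> m \in msupp f -> ~~ (U_(j) <= m)%MM.
Proof. by move=> fj m_in; apply: contra fj; apply: in_indets_term. Qed.

Lemma notin_indetsB (j : 'I_n) (f g : P) :
  ~~ in_indets j f -> ~~ in_indets j g -> ~~ in_indets j (f - g).
Proof.
move=> /hasPn fj /hasPn gj; apply/hasPn => m /msuppB_le.
by rewrite mem_cat => /orP [/fj|/gj].
Qed.

Lemma notin_indetsZ (j : 'I_n) (c : K) (f : P) :
  ~~ in_indets j f -> ~~ in_indets j (c *: f).
Proof. by move=> /hasPn fj; apply/hasPn => m /msuppZ_le /fj. Qed.

Lemma notin_indetsX (i j : 'I_n) : i != j -> ~~ in_indets j ('X_i : P).
Proof.
by move=> ij; apply/hasPn => m; rewrite msuppX mem_seq1 => /eqP ->; rewrite mnm1E (negbTE ij).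
Qed.

Lemma notin_indets_coef (j : 'I_n) (f : P) : ~~ in_indets j f -> f@_U_(j) = 0.
Proof.
move=> /hasPn fj; apply: memN_msupp_eq0; apply/negP => /fj.
by rewrite mnm1E eqxx.
Qed.

Lemma Lin_coef (g : P) m0 : mdeg m0 = 1%N -> (Lin g)@_m0 = g@_m0.
Proof.
move=> deg1; rewrite /Lin raddf_sum /= big_mkcond /= [in RHS](mpolyE g) raddf_sum /=.
apply: eq_bigr => m _; rewrite !mcoeffZ !mcoeffX.
have [->|ne] := eqVneq m m0; first by rewrite deg1 eqxx.
by case: ifP; rewrite ?mulr0.
Qed.

End Indeterminates.

Section NormalForm.
Variables (K : fieldType) (n : nat) (le : rel 'X_{1..n}).
Hypothesis le_order : term_order le.
Local Notation P := {mpoly K[n]}.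

(* Normal forms do not create terms above a bound satisfied by the input:
   otherwise the largest term of r would be the leading term of t - r,
   an element of J, contradicting the normal form condition. *)
Lemma NF_bound (J : P -> Prop) (t r : P) B :
  is_NF le J t r -> (forall m, m \in msupp t -> le m B) ->
  forall m, m \in msupp r -> le m B.
Proof.
move=> [J_tr irred] t_le m m_in; apply/negPn/negP => m_nle.
have r0 : r != 0 by rewrite -msupp_eq0; case: (msupp r) m_in.
have L_nle : ~~ le (mLT le r) B.
  by apply: contra m_nle => L_le;
  exact: (term_le_trans le_order (mLT_max le_order m_in) L_le).
have B_le : le B (mLT le r) by have := term_le_total le_order (mLT le r) B; rewrite (negbTE L_nle).
have L_t : mLT le r \notin msupp t by apply: contra L_nle; apply: t_le.
have L_tr : mLT le r \in msupp (t - r).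
  by rewrite mcoeff_msupp mcoeffB (memN_msupp_eq0 L_t) sub0r oppr_eq0 -mcoeff_msupp (mLT_in le_order r0).
have LT_tr : mLT le (t - r) = mLT le r.
  apply: (mLT_eq le_order) => // m' /msuppB_le; rewrite mem_cat => /orP [m'_t|m'_r].
    exact: (term_le_trans le_order (t_le _ m'_t) B_le).
  exact: (mLT_max le_order).
apply: (irred (mLT le r) (mLT_in le_order r0)); exists (t - r); split => //.
  by rewrite -msupp_eq0; case: (msupp (t - r)) L_tr.
by rewrite LT_tr lepm_refl.
Qed.

Lemma LT_Xsub (j : 'I_n) (h : P) :
  ~~ in_indets j h -> (forall m, m \in msupp h -> le m U_(j)%MM) ->
  mLT le ('X_j - h) = U_(j)%MM /\ mLC le ('X_j - h) = 1.
Proof.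
move=> hj h_le.
have coef1 : ('X_j - h)@_U_(j) = 1.
  by rewrite mcoeffB mcoeffXU eqxx notin_indets_coef // subr0.
suff LT : mLT le ('X_j - h) = U_(j)%MM by rewrite /mLC LT.
apply: (mLT_eq le_order); first by rewrite mcoeff_msupp coef1 oner_neq0.
move=> m' /msuppB_le; rewrite mem_cat => /orP [|/h_le //].
by rewrite msuppX mem_seq1 => /eqP ->; apply: (term_le_refl le_order).
Qed.

End NormalForm.

Section PartB.
Variables (K : fieldType) (n s : nat) (I : {mpoly K[n]} -> Prop).
Variables (z : 'I_s -> 'I_n) (le : rel 'X_{1..n}).
Hypothesis le_order : term_order le.
Hypothesis I_ideal : is_ideal I.
Hypothesis I_in_M : forall f, I f -> in_M f.
Hypothesis z_inj : injective z.
Local Notation P := {mpoly K[n]}.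

Variables (f : 'I_s -> P) (gs : seq P).
Hypothesis data : Z_separating_GB_data le I z f gs.
Variable h : 'I_s -> P.
Hypothesis h_NF : forall i, is_NF le (Ihat I z) (tail (z i) (f i)) (h i).

Local Notation Xh i := ('X_(z i) - h i).

Lemma f_LT i : mLT le (f i) = U_(z i)%MM.
Proof. by case: data. Qed.

Lemma f_neq0 i : f i != 0.
Proof. by case: data => coh _ _ _; case: (coh i). Qed.

(* tail(f_i) lies in P^: it avoids z_i by z_i-separation, and avoids z_k,
   k != i, since neither x_(z i) nor f_i involves z_k. *)
Lemma tail_in_Phat i : in_Phat z (tail (z i) (f i)).
Proof.
case: data => coh _ _ _ k; have [_ [_ _ _ sep] _] := coh i.
have [->|ki] := eqVneq k i => //.
apply: notin_indetsB; first by apply: notin_indetsX; rewrite (inj_eq z_inj) eq_sym.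
by apply: notin_indetsZ; have [_ _ ->] := coh k; rewrite // eq_sym.
Qed.

(* h_i lies in P^, as the difference of tail(f_i) and tail(f_i) - h_i. *)
Lemma h_in_Phat i : in_Phat z (h i).
Proof.
move=> k; have [[_ tail_h] _] := h_NF i.
have -> : h i = tail (z i) (f i) - (tail (z i) (f i) - h i) by rewrite opprB addrC subrK.
exact: notin_indetsB (tail_in_Phat i k) (tail_h k).
Qed.

(* The terms of h_i lie below z_i, as do those of tail(f_i) = z_i - f_i/c_i. *)
Lemma h_below i m : m \in msupp (h i) -> le m U_(z i)%MM.
Proof.
apply: (NF_bound le_order (h_NF i)) => m' /msuppB_le; rewrite mem_cat => /orP [].
  by rewrite msuppX mem_seq1 => /eqP ->; apply: (term_le_refl le_order).
by move/msuppZ_le => m'_in; rewrite -f_LT; apply: (mLT_max le_order).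
Qed.

Lemma Xh_LT i : mLT le (Xh i) = U_(z i)%MM /\ mLC le (Xh i) = 1.
Proof. exact: (LT_Xsub le_order (h_in_Phat i i) (@h_below i)). Qed.

Lemma Xh_neq0 i : Xh i != 0.
Proof.
apply/eqP => Xh0; have [_] := Xh_LT i.
by rewrite Xh0 /mLC mcoeff0 => /eqP; rewrite eq_sym oner_eq0.
Qed.

(* x_(z i) - h_i = f_i / c_i + (tail(f_i) - h_i), a sum of elements of I. *)
Lemma Xh_in_I i : I (Xh i).
Proof.
case: I_ideal => _ I_add _.
have -> : Xh i = (mLC le (f i))^-1 *: f i + (tail (z i) (f i) - h i).
  by rewrite /tail /mLC f_LT addrA addrCA subrr addr0.
apply: I_add; last by have [[] ] := h_NF i.
case: data => _ _ _ [inG _]; have [] // := inG ((mLC le (f i))^-1 *: f i).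
by rewrite mem_cat; apply/orP; left; apply/mapP; exists i; rewrite ?mem_enum.
Qed.

Local Notation newG := ([seq Xh i | i <- enum 'I_s] ++ gs).

(* The leading terms of newG are those of the given Groebner basis. *)
Lemma newG_GB : is_GB le I newG.
Proof.
case: data => _ _ [[gs_in _] _ _] [_ lead].
split=> [g|p Ip p0].
  rewrite mem_cat => /orP [/mapP [i _ ->]|/gs_in [[]] //].
  by split; [apply: Xh_in_I | apply: Xh_neq0].
have [g + g_div] := lead p Ip p0; rewrite mem_cat => /orP [/mapP [i _ Eg]|g_in].
  exists (Xh i); first by rewrite mem_cat; apply/orP; left; apply/mapP; exists i; rewrite ?mem_enum.
  have [-> _] := Xh_LT i; move: g_div.
  by rewrite Eg (mLTZ le_order) ?f_LT // invr_eq0 (mLC_neq0 le_order) ?f_neq0.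
by exists g; rewrite ?mem_cat ?g_in ?orbT.
Qed.

Lemma reduced_Xh_Xh i j m : Xh j != Xh i -> m \in msupp (Xh i) ->
  ~~ (mLT le (Xh j) <= m)%MM.
Proof.
move=> ne; have [-> _] := Xh_LT j.
move/msuppB_le; rewrite mem_cat => /orP [|]; last exact/notin_indets_term/h_in_Phat.
rewrite msuppX mem_seq1 => /eqP ->; apply/negP => /mnm_lepP /(_ (z j)).
rewrite !mnm1E eqxx; case: eqP => // /z_inj ji _.
by move: ne; rewrite ji eqxx.
Qed.

Lemma reduced_Xh_gs i g m : g \in gs -> m \in msupp (Xh i) ->
  ~~ (mLT le g <= m)%MM.
Proof.
case: data => _ _ [[gs_in _] _ _] _ g_in.
have [[Ig gP] g0] := gs_in g g_in.
move/msuppB_le; rewrite mem_cat => /orP [|m_in].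
  rewrite msuppX mem_seq1 => /eqP ->; apply/negP => g_div.
  have LT_z := mLT_divides_U le_order (I_in_M Ig) g0 g_div.
  move/negP: (gP i); apply; apply: (in_indets_term (mLT_in le_order g0)).
  by rewrite LT_z lepm_refl.
have [_ irred] := h_NF i; apply/negP => g_div.
by apply: (irred m m_in); exists g; split.
Qed.

Lemma reduced_gs_Xh g j m : g \in gs -> m \in msupp g ->
  ~~ (mLT le (Xh j) <= m)%MM.
Proof.
case: data => _ _ [[gs_in _] _ _] _ g_in.
have [-> _] := Xh_LT j; have [[_ gP] _] := gs_in g g_in.
exact: notin_indets_term (gP j).
Qed.

Lemma newG_reduced : is_reduced_GB le I newG.
Proof.
case: data => _ _ [_ gs_monic gs_red] _.
split; first exact: newG_GB.
  by move=> g; rewrite mem_cat => /orP [/mapP [i _ ->]|/gs_monic //]; case: (Xh_LT i).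
move=> g g'; rewrite !mem_cat => /orP [/mapP [i _ ->]|g_in] /orP [/mapP [j _ ->]|g'_in].
- by move=> ne m; apply: reduced_Xh_Xh.
- by move=> _ m; apply: reduced_Xh_gs.
- by move=> _ m; apply: reduced_gs_Xh.
- exact: gs_red.
Qed.

End PartB.

Section PartA.
Variables (K : fieldType) (n s : nat) (I : {mpoly K[n]} -> Prop).
Variables (z : 'I_s -> 'I_n) (le : rel 'X_{1..n}).
Hypothesis le_order : term_order le.
Hypothesis I_in_M : forall f, I f -> in_M f.
Hypothesis z_inj : injective z.
Hypothesis sep_order : Z_separating_order le I z.
Local Notation P := {mpoly K[n]}.

Variable G : seq P.
Hypothesis G_reduced : is_reduced_GB le I G.

Lemma exists_LT_z i : exists2 g, g \in G & mLT le g = U_(z i)%MM.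
Proof.
case: sep_order => f [If f_LT coh]; have [f0 _ _] := coh i.
case: G_reduced => [[G_in lead] _ _].
have [g g_in g_div] := lead _ (If i) f0; exists g => //.
have [Ig g0] := G_in g g_in.
by apply: (mLT_divides_U le_order (I_in_M Ig) g0); rewrite -f_LT.
Qed.

Definition gZ i := nth 0 G (find (fun g => mLT le g == U_(z i)%MM) G).

Lemma gZ_spec i : gZ i \in G /\ mLT le (gZ i) = U_(z i)%MM.
Proof.
have has_z : has (fun g => mLT le g == U_(z i)%MM) G.
  by have [g g_in LT] := exists_LT_z i; apply/hasP; exists g; rewrite ?LT.
split; first by apply: mem_nth; rewrite -has_find.
exact/eqP/(nth_find 0 has_z).
Qed.

Lemma gZ_coef i : (gZ i)@_U_(z i) = 1.
Proof.
have [g_in LT] := gZ_spec i; case: G_reduced => _ monic _.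
by have := monic _ g_in; rewrite /mLC LT.
Qed.

Lemma gZ_neq0 i : gZ i != 0.
Proof. by case: G_reduced => [[G_in _] _ _]; case: (gZ_spec i) => /G_in []. Qed.

Lemma divisible_term_owner g i m :
  g \in G -> m \in msupp g -> (U_(z i) <= m)%MM -> g = gZ i.
Proof.
move=> g_in m_in m_div; apply/eqP/negPn/negP => ne.
case: G_reduced => _ _ red; have [gZ_in LT] := gZ_spec i.
have := red g (gZ i) g_in gZ_in; rewrite eq_sym => /(_ ne m m_in).
by rewrite LT m_div.
Qed.

(* ... and in gZ i such a term is below z_i, hence equal to z_i. *)
Lemma gZ_divisible_term i m :
  m \in msupp (gZ i) -> (U_(z i) <= m)%MM -> m = U_(z i)%MM.
Proof.
move=> m_in m_div; apply: (term_le_anti le_order _ (le_of_divides le_order m_div)).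
by case: (gZ_spec i) => _ <-; apply: (mLT_max le_order).
Qed.

Lemma gZ_separating i : z_separating (z i) (gZ i).
Proof.
have Lin_z : (Lin (gZ i))@_U_(z i) = 1 by rewrite Lin_coef ?mdeg1 // gZ_coef.
have z_in : U_(z i)%MM \in msupp (Lin (gZ i)) by rewrite mcoeff_msupp Lin_z oner_neq0.
split.
- apply: I_in_M; case: G_reduced => [[G_in _] _ _].
  by case: (gZ_spec i) => /G_in [].
- by apply: contra_neq (oner_neq0 K) => Lin0; rewrite -Lin_z Lin0 mcoeff0.
- by apply: in_indets_term z_in _; rewrite lepm_refl.
apply/hasPn => m; rewrite lt0n -lep1mP /tail gZ_coef invr1 scale1r.
rewrite mcoeff_msupp mcoeffB; apply: contraL => m_div.
have [->|ne] := eqVneq m U_(z i)%MM; first by rewrite mcoeffXU eqxx gZ_coef subrr eqxx.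
have -> : (gZ i)@_m = 0.
  by apply: memN_msupp_eq0; apply: contra ne => m_in; rewrite (gZ_divisible_term m_in).
by rewrite subr0 mcoeffX (eq_sym U_(z i)%MM) (negbTE ne) eqxx.
Qed.

(* No gZ j with j != i involves z_i, since it would then be gZ i. *)
Lemma gZ_coherent : coh_Z_separating z gZ.
Proof.
move=> i; split; [exact: gZ_neq0 | exact: gZ_separating |].
move=> j ji; apply/hasPn => m m_in; rewrite lt0n -lep1mP; apply/negP => m_div.
have [gZj_in LTj] := gZ_spec j; have [_ LTi] := gZ_spec i.
have := congr1 (mLT le) (divisible_term_owner gZj_in m_in m_div).
by rewrite LTi LTj => /eqP; rewrite eq_mnm1 (inj_eq z_inj) (negbTE ji).
Qed.

Definition free_of_Z (g : P) := [forall k, ~~ in_indets (z k) g].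
Definition G_hat := filter free_of_Z G.

Lemma not_free_of_Z g :
  ~~ free_of_Z g -> exists k m, m \in msupp g /\ (U_(z k) <= m)%MM.
Proof.
rewrite negb_forall => /existsP [k]; rewrite negbK => /hasP [m m_in mk].
by exists k, m; rewrite lep1mP -lt0n.
Qed.

Lemma G_split : G =i ZGB_seq le gZ G_hat.
Proof.
move=> g; rewrite /ZGB_seq mem_cat mem_filter.
have -> : [seq (mLC le (gZ i))^-1 *: gZ i | i <- enum 'I_s] = [seq gZ i | i <- enum 'I_s].
  by apply: eq_map => i; rewrite /mLC (gZ_spec i).2 gZ_coef invr1 scale1r.
apply/idP/idP => [g_in|/orP [/mapP [i _ ->]|/andP []//]]; last by case: (gZ_spec i).
have [free|/not_free_of_Z [k [m [m_in m_div]]]] := boolP (free_of_Z g).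
  by apply/orP; right; apply/andP.
rewrite (divisible_term_owner g_in m_in m_div).
by apply/orP; left; apply/mapP; exists k; rewrite ?mem_enum.
Qed.

(* A nonzero f in I cap P^ has its leading term divisible by that of some
   g in G; g cannot be some gZ k, else z_k would divide LT(f). *)
Lemma G_hat_reduced : is_reduced_GB le (Ihat I z) G_hat.
Proof.
case: G_reduced => [[G_in lead] monic red].
split; [split|move=> g; rewrite mem_filter => /andP [_ /monic] //|].
- move=> g; rewrite mem_filter => /andP [/forallP free g_in].
  by have [Ig g0] := G_in g g_in.
- move=> p [Ip pP] p0; have [g g_in g_div] := lead p Ip p0.
  exists g; rewrite // mem_filter g_in andbT.
  apply/negP => /negP /not_free_of_Z [k [m [m_in m_div]]].
  move: g_div; rewrite (divisible_term_owner g_in m_in m_div) (gZ_spec k).2 => z_div.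
  by move/negP: (pP k); apply; apply: in_indets_term (mLT_in le_order p0) z_div.
- by move=> g g'; rewrite !mem_filter => /andP [_ g_in] /andP [_ g'_in]; apply: red.
Qed.

Lemma reduced_GB_Z_separating : Z_separating_GB le I z G.
Proof.
exists gZ, G_hat; split; last exact: G_split.
split; [exact: gZ_coherent | by move=> i; case: (gZ_spec i) | exact: G_hat_reduced |].
by case: G_reduced => GB _ _; apply: is_GB_eq_mem G_split GB.
Qed.

End PartA.

Unset Implicit Arguments.

Theorem proposition2p12 (K : fieldType) (n s : nat) (I : {mpoly K[n]} -> Prop)
    (z : 'I_s -> 'I_n) (le : rel 'X_{1..n}) :
  is_ideal I -> (forall f, I f -> in_M f) ->
  (0 < s)%N -> injective z ->
  term_order le -> Z_separating_order le I z ->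
  (forall G, is_reduced_GB le I G -> Z_separating_GB le I z G) /\
  (forall (f : 'I_s -> {mpoly K[n]}) (gs : seq {mpoly K[n]}),
     Z_separating_GB_data le I z f gs ->
     forall h : 'I_s -> {mpoly K[n]},
       (forall i, is_NF le (Ihat I z) (tail (z i) (f i)) (h i)) ->
       is_reduced_GB le I ([seq 'X_(z i) - h i | i <- enum 'I_s] ++ gs)).
Proof.
move=> I_ideal I_in_M _ z_inj le_order sep_order; split.
- by move=> G G_reduced; exact: (reduced_GB_Z_separating le_order I_in_M z_inj sep_order G_reduced).
- by move=> f gs data h h_NF; exact: (newG_reduced le_order I_ideal I_in_M z_inj data h_NF).
Qed.
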